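(* Let $\Gamma=(V,m,\tau)$ be a weak $W$-graph and let $A\subseteq\Delta$. Then the representation $\mathbb{C}V$, restricted to $W(A)$, contains a copy of the sign representation of $W(A)$ if and only if $A\subseteq\tau(v)$ for some $v\in V$.
   Context: $W$ is a Weyl group with a fixed set $\Delta$ of simple roots; for a root $\alpha$, $s_\alpha$ is the reflection in the hyperplane orthogonal to $\alpha$. A weak $W$-graph is a triple $\Gamma=(V,m,\tau)$ where $V$ is a finite set, $m:V\times V\to\mathbb{C}$ is a map, and $\tau$ is a map from $V$ to the power set of $\Delta$, such that the linear maps $s_\alpha:\mathbb{C}V\to\mathbb{C}V$ ($\alpha\in\Delta$) given on basis vectors by $s_\alpha(v)=-v$ if $\alpha\in\tau(v)$ and $s_\alpha(v)=v-\sum_{u\in V,\ \alpha\in\tau(u)} m(u,v)u$ if $\alpha\notin\tau(v)$ define a representation of $W$ on $\mathbb{C}V$. For $A\subseteq\Delta$, $W(A)$ is the subgroup of $W$ generated by $\{s_\alpha:\alpha\in A\}$; its sign representation is the one-dimensional representation on which each $s_\alpha$, $\alpha\in A$, acts by $-1$. *)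

From HB Require Import structures.
From mathcomp Require Import all_boot all_order all_algebra all_field.
Set Implicit Arguments. Unset Strict Implicit. Unset Printing Implicit Defensive.
Import Order.TTheory GRing.Theory Num.Theory.
Local Open Scope ring_scope.

Section RootSystems.
Variables (R : realFieldType) (n : nat).

Definition dotp (u v : 'cV[R]_n) : R := (u^T *m v) 0 0.

(* the matrix of the reflection s_a in the hyperplane orthogonal to a,
   acting on column vectors:  y |-> y - (2 (a,y)/(a,a)) a *)
Definition reflmx (a : 'cV[R]_n) : 'M[R]_n :=
  1%:M - (2 / dotp a a) *: (a *m a^T).

Definition root_system (Phi : seq 'cV[R]_n) : Prop :=
  [/\ uniq Phi, 0 \notin Phi &
      (forall y : 'cV[R]_n, exists c : 'I_(size Phi) -> R,
          y = \sum_(i < size Phi) c i *: Phi`_i)] /\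
  [/\ (forall a b, a \in Phi -> b \in Phi -> b - (2 * dotp a b / dotp a a) *: a \in Phi),
      (forall a b, a \in Phi -> b \in Phi ->
          exists z : int, 2 * dotp a b / dotp a a = z%:~R) &
      (forall a (c : R), a \in Phi -> c *: a \in Phi -> c = 1 \/ c = -1)].

(* del : I -> R^n enumerates a set Delta of simple roots (a base) of Phi *)
Definition simple_system (Phi : seq 'cV[R]_n) (I : finType) (del : I -> 'cV[R]_n)
  : Prop :=
  [/\ (forall i, del i \in Phi),
      (forall c : I -> R, \sum_i c i *: del i = 0 -> forall i, c i = 0) &
      (forall b, b \in Phi -> exists c : I -> R,
          b = \sum_i c i *: del i /\
          ((forall i, 0 <= c i) \/ (forall i, c i <= 0)))].

(* the subgroup of GL_n(R) generated by a set S of involutions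
   (closure of 1 under right multiplication by elements of S) *)
Inductive gen_by (S : 'M[R]_n -> Prop) : 'M[R]_n -> Prop :=
| gen_by1 : gen_by S 1%:M
| gen_byM g s : gen_by S g -> S s -> gen_by S (g *m s).

Definition Weyl (Phi : seq 'cV[R]_n) : 'M[R]_n -> Prop :=
  gen_by (fun s => exists2 a, a \in Phi & s = reflmx a).

Definition Wsub (I : finType) (del : I -> 'cV[R]_n) (A : {set I})
  : 'M[R]_n -> Prop :=
  gen_by (fun s => exists2 i, i \in A & s = reflmx (del i)).

End RootSystems.

(* Weak W-graphs.  CV is C^#|V| (column vectors over algC), the basis vector
   indexed by j : 'I_#|V| being enum_val j. *)
Section WGraph.
Variables (I V : finType) (m : V -> V -> algC) (tau : V -> {set I}).

(* matrix of the linear map s_alpha (alpha = del i) on CV: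
   entry (k, j) = coefficient of enum_val k in s_alpha(enum_val j) *)
Definition Wgraph_mx (i : I) : 'M[algC]_#|V| :=
  \matrix_(k, j)
    let v := enum_val j in let u := enum_val k in
    if i \in tau v then (if u == v then -1 else 0)
    else (u == v)%:R - (if i \in tau u then m u v else 0).

Definition is_Wgraph_rep (R : realFieldType) (n : nat) (Phi : seq 'cV[R]_n)
  (del : I -> 'cV[R]_n) (rho : 'M[R]_n -> 'M[algC]_#|V|) : Prop :=
  [/\ rho 1%:M = 1%:M,
      (forall g h, Weyl Phi g -> Weyl Phi h -> rho (g *m h) = rho g *m rho h) &
      (forall i, rho (reflmx (del i)) = Wgraph_mx i)].

Definition weak_W_graph (R : realFieldType) (n : nat) (Phi : seq 'cV[R]_n)
  (del : I -> 'cV[R]_n) : Prop :=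
  exists rho, is_Wgraph_rep Phi del rho.

End WGraph.

Definition sign_char (R : realFieldType) (n : nat) (I : finType)
  (del : I -> 'cV[R]_n) (A : {set I}) (chi : 'M[R]_n -> algC) : Prop :=
  [/\ chi 1%:M = 1,
      (forall g h, Wsub del A g -> Wsub del A h -> chi (g *m h) = chi g * chi h) &
      (forall i, i \in A -> chi (reflmx (del i)) = -1)].

(* the restriction of rho to W(A) contains a copy of the sign representation:
   a nonzero vector x spanning a line on which W(A) acts by the sign character *)
Definition contains_sign (R : realFieldType) (n : nat) (I : finType)
  (del : I -> 'cV[R]_n) (A : {set I}) (N : nat) (rho : 'M[R]_n -> 'M[algC]_N)
  : Prop :=
  exists chi, sign_char del A chi /\
  exists2 x : 'cV[algC]_N, x != 0 &
    forall g, Wsub del A g -> rho g *m x = chi g *: x.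

From HB Require Import structures.
From mathcomp Require Import all_boot all_order all_algebra all_field.
Local Open Scope ring_scope.
Import GRing.Theory Num.Theory.
Set Implicit Arguments.

(* If A is contained in tau(v), every s_alpha with alpha in A sends the basis
   vector v to -v, so v spans a copy of the sign representation of W(A).
   Conversely, if tau(u) misses some alpha in A, the row of s_alpha indexed by
   u is the u-th unit row, so s_alpha fixes the u-coordinate of every vector;
   on a vector negated by s_alpha that coordinate vanishes (characteristic 0).
   Hence a nonzero sign vector has a nonzero coordinate only at vertices u
   with A contained in tau(u). *)

Lemma gen_by_sub (R : realFieldType) (n : nat) (S T : 'M[R]_n -> Prop) g :
  (forall s, S s -> T s) -> gen_by S g -> gen_by T g.
Proof.
move=> ST; elim=> [|h s _ IH Ss]; first exact: gen_by1.
exact: gen_byM IH (ST _ Ss).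
Qed.

Section Parabolic.
Variables (R : realFieldType) (n : nat) (I : finType) (del : I -> 'cV[R]_n).
Variable A : {set I}.

Lemma Wsub_reflmx i : i \in A -> Wsub del A (reflmx (del i)).
Proof.
move=> iA; rewrite -[reflmx _]mul1mx.
by apply: gen_byM; [exact: gen_by1 | exists i].
Qed.

Lemma Wsub_Weyl (Phi : seq 'cV[R]_n) :
  (forall i, del i \in Phi) -> forall g, Wsub del A g -> Weyl Phi g.
Proof. by move=> delPhi g; apply: gen_by_sub => s [i _ ->]; exists (del i). Qed.

Lemma contains_sign_reflN (N : nat) (rho : 'M[R]_n -> 'M[algC]_N) :
  contains_sign del A rho ->
  exists2 x : 'cV_N, x != 0 &
    forall i, i \in A -> rho (reflmx (del i)) *m x = - x.
Proof.
move=> [chi [[_ _ chiN] [x x_neq0 rhox]]]; exists x => // i iA.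
by rewrite rhox ?chiN ?scaleN1r //; apply: Wsub_reflmx.
Qed.

Section SignLine.
Variables (N : nat) (rho : 'M[R]_n -> 'M[algC]_N) (k : 'I_N).
Hypothesis rho1 : rho 1%:M = 1%:M.
Hypothesis rhoM : forall g h, Wsub del A g -> Wsub del A h ->
  rho (g *m h) = rho g *m rho h.
Let e : 'cV[algC]_N := delta_mx k 0.
Hypothesis rho_reflN : forall i, i \in A -> rho (reflmx (del i)) *m e = - e.

Lemma eigenvalue_delta (B : 'M[algC]_N) c : B *m e = c *: e -> c = B k k.
Proof. by move/matrixP/(_ k 0); rewrite -colE !mxE !eqxx mulr1. Qed.

Lemma Wsub_eigen_delta g : Wsub del A g -> rho g *m e = rho g k k *: e.
Proof.
move=> Wg; suff [c rho_g_e] : exists c, rho g *m e = c *: e.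
  by rewrite -(eigenvalue_delta rho_g_e).
elim: Wg => [|h s Wh [c IH] [i iA ->]]; first by exists 1; rewrite rho1 mul1mx scale1r.
have W_si := Wsub_reflmx iA.
by exists (- c); rewrite rhoM // -mulmxA rho_reflN // mulmxN IH scaleNr.
Qed.

Lemma sign_char_diag : sign_char del A (fun g => rho g k k).
Proof.
split=> [|g h Wg Wh|i iA]; first by rewrite rho1 mxE eqxx.
  rewrite rhoM //; symmetry; apply: eigenvalue_delta.
  by rewrite -mulmxA Wsub_eigen_delta // -scalemxAr Wsub_eigen_delta // scalerA mulrC.
by apply/esym/eigenvalue_delta; rewrite rho_reflN // scaleN1r.
Qed.

Lemma contains_sign_delta : contains_sign del A rho.
Proof.
exists (fun g => rho g k k); split; first exact: sign_char_diag.
exists e; last exact: Wsub_eigen_delta.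
by apply/eqP => /matrixP/(_ k 0); rewrite !mxE !eqxx => /eqP; rewrite oner_eq0.
Qed.

End SignLine.
End Parabolic.

Section WGraphMatrices.
Variables (I V : finType) (m : V -> V -> algC) (tau : V -> {set I}).

Lemma Wgraph_mx_delta i v (e := delta_mx (enum_rank v) 0 : 'cV[algC]_#|V|) :
  i \in tau v -> Wgraph_mx m tau i *m e = - e.
Proof.
move=> iv; rewrite /e -colE; apply/matrixP => a b; rewrite (ord1 b) !mxE /=.
rewrite enum_rankK iv eqxx andbT -(inj_eq enum_rank_inj) enum_valK.
by case: (a == enum_rank v); rewrite ?oppr0.
Qed.

Lemma Wgraph_mx_coord i (x : 'cV[algC]_#|V|) k :
  i \notin tau (enum_val k) -> (Wgraph_mx m tau i *m x) k 0 = x k 0.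
Proof.
move=> ik; rewrite mxE (bigD1 k) //= big1 => [|j jk].
  by rewrite !mxE /= (negbTE ik) eqxx subr0 mul1r addr0.
have vj_neq_vk : (enum_val k == enum_val j) = false.
  by rewrite (inj_eq enum_val_inj) eq_sym (negbTE jk).
by rewrite !mxE /= vj_neq_vk (negbTE ik); case: ifP; rewrite ?subr0 mul0r.
Qed.

Lemma Wgraph_sign_support (A : {set I}) (x : 'cV[algC]_#|V|) k :
  (forall i, i \in A -> Wgraph_mx m tau i *m x = - x) ->
  x k 0 != 0 -> A \subset tau (enum_val k).
Proof.
move=> xN xk_neq0; apply/subsetP => i iA; apply: contraR xk_neq0 => ik.
have := Wgraph_mx_coord i x k ik; rewrite xN // mxE => /eqP.
by rewrite eqNr.
Qed.

End WGraphMatrices.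

Lemma nonzero_coord {F : nmodType} {N : nat} {x : 'cV[F]_N} :
  x != 0 -> exists k, x k 0 != 0.
Proof.
move=> x_neq0; apply/existsP; apply: contraR x_neq0 => /existsPn x0.
by apply/eqP/matrixP => a b; rewrite (ord1 b) mxE; apply/eqP/negbNE/x0.
Qed.

Unset Implicit Arguments.

Theorem corollary2p9 (R : realFieldType) (n : nat) (Phi : seq 'cV[R]_n)
  (I : finType) (del : I -> 'cV[R]_n)
  (V : finType) (m : V -> V -> algC) (tau : V -> {set I})
  (rho : 'M[R]_n -> 'M[algC]_#|V|) (A : {set I}) :
  root_system Phi -> simple_system Phi del ->
  weak_W_graph m tau Phi del -> is_Wgraph_rep m tau Phi del rho ->
  contains_sign del A rho <-> exists v : V, A \subset tau v.
Proof.
move=> _ [delPhi _ _] _ [rho1 rhoM rhoS].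
have Wsub_Weyl_A := Wsub_Weyl (A := A) Phi delPhi.
have rhoM_A g h : Wsub del A g -> Wsub del A h -> rho (g *m h) = rho g *m rho h.
  by move=> Wg Wh; apply: (rhoM); apply: Wsub_Weyl_A.
split=> [/contains_sign_reflN [x x_neq0 rhoN] | [v Av]].
  have WgraphN i : i \in A -> Wgraph_mx m tau i *m x = - x by rewrite -rhoS; apply: rhoN.
  have [k xk_neq0] := nonzero_coord x_neq0.
  by exists (enum_val k); exact: Wgraph_sign_support k WgraphN xk_neq0.
apply: (contains_sign_delta rho (k := enum_rank v) rho1 rhoM_A) => i iA.
by rewrite rhoS Wgraph_mx_delta // (subsetP Av).
Qed.
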